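(* Let $m$ be a positive integer, $n=2^m$, and let $v\in\{\pm1\}^n$ have at most $\ell$ sign changes. Then $$\sum_{i\in\mathcal{T}}\ \sum_{j=0}^{2^i-1}2^{-(m-i)/2}\,\big|\langle\psi_{i,j},v\rangle\big|\le \ell\log_2 n+1,$$ where $\mathcal{T}=\{0_{\mathrm{father}},0_{\mathrm{mother}},1,\dots,m-1\}$ and the indices $0_{\mathrm{father}},0_{\mathrm{mother}}$ are given the numerical value $0$ in the summation range and in the weight $2^{-(m-i)/2}$.
   Context: A vector $v\in\{\pm1\}^n$ has at most $\ell$ sign changes if there are at most $\ell$ indices $i\in[n-1]$ with $v_{i+1}\ne v_i$. The Haar wavelet basis of $\mathbb{R}^n$ ($n=2^m$) is the orthonormal basis consisting of the father wavelet $\psi_{0_{\mathrm{father}},0}=n^{-1/2}(1,\dots,1)$, the mother wavelet $\psi_{0_{\mathrm{mother}},0}=n^{-1/2}(1,\dots,1,-1,\dots,-1)$ (with $n/2$ entries $1$ followed by $n/2$ entries $-1$), and, for every $1\le i<m$ and $0\le j<2^i$, the wavelet $\psi_{i,j}$ whose coordinates $2^{m-i}j+1,\dots,2^{m-i}j+2^{m-i-1}$ equal $2^{-(m-i)/2}$, whose coordinates $2^{m-i}j+2^{m-i-1}+1,\dots,2^{m-i}j+2^{m-i}$ equal $-2^{-(m-i)/2}$, and whose other coordinates are $0$. *)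

From HB Require Import structures.
From mathcomp Require Import all_boot all_order all_algebra.
Set Implicit Arguments. Unset Strict Implicit. Unset Printing Implicit Defensive.
Import Order.TTheory GRing.Theory Num.Theory.
Local Open Scope ring_scope.

(* Coordinates are 0-based: coordinate k : 'I_n corresponds to the paper's k+1. *)

Definition sign_changes (R : eqType) (n : nat) (v : 'I_n -> R) : nat :=
  #|[set i : 'I_n | [exists j : 'I_n, (val j == (val i).+1)%N && (v i != v j)]]|.

Definition is_pm1 (R : pzRingType) (n : nat) (v : 'I_n -> R) : Prop :=
  forall k, v k = 1 \/ v k = -1.

Definition haar_father (R : rcfType) (m : nat) (k : 'I_(2 ^ m)) : R :=
  (Num.sqrt ((2 ^ m)%N%:R))^-1.

Definition haar_mother (R : rcfType) (m : nat) (k : 'I_(2 ^ m)) : R :=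
  if (val k < (2 ^ m)./2)%N then (Num.sqrt ((2 ^ m)%N%:R))^-1
  else - (Num.sqrt ((2 ^ m)%N%:R))^-1.

Definition haar_psi (R : rcfType) (m i j : nat) (k : 'I_(2 ^ m)) : R :=
  let s := (2 ^ (m - i))%N in
  let c := (Num.sqrt (s%:R))^-1 in
  if ((j * s <= val k) && (val k < j * s + s./2))%N then c
  else if ((j * s + s./2 <= val k) && (val k < j * s + s))%N then - c
  else 0.

Definition ip (R : pzRingType) (n : nat) (u v : 'I_n -> R) : R :=
  \sum_(k < n) u k * v k.

Definition haar_weight (R : rcfType) (m i : nat) : R :=
  (Num.sqrt ((2 ^ (m - i))%N%:R))^-1.

Definition haar_weighted_sum (R : rcfType) (m : nat) (v : 'I_(2 ^ m) -> R) : R :=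
  haar_weight R m 0 * `|ip (@haar_father R m) v|
  + haar_weight R m 0 * `|ip (@haar_mother R m) v|
  + \sum_(1 <= i < m) \sum_(0 <= j < 2 ^ i) haar_weight R m i * `|ip (@haar_psi R m i j) v|.

From mathcomp Require Import all_boot all_order all_algebra.
From mathcomp Require Import zify.
Import Order.TTheory GRing.Theory Num.Theory.
Local Open Scope ring_scope.

(* Every wavelet psi_{i,j} is a block c on [a, a + h), -c on [a + h, a + 2h) with
   c = (2h)^{-1/2}, and its weight is c as well.  Hence the weighted coefficient is
   c^2 |(sum over first half) - (sum over second half)| <= 1 for a +-1 vector, and
   it vanishes when v is constant on the support.  So each level contributes at
   most the number of supports containing a sign change, i.e. at most l; the m
   levels (the mother wavelet being psi_{0,0}) give l m, and the father adds 1. *)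

Definition haar_block_diff {V : zmodType} (w : nat -> V) (a h : nat) : V :=
  \sum_(a <= k < a + h) w k - \sum_(a + h <= k < a + h + h) w k.

Lemma step_eq_const (T : Type) (a b : nat) (w : nat -> T) :
  (forall k, (a <= k)%N -> (k.+1 < b)%N -> w k = w k.+1) ->
  forall k, (a <= k < b)%N -> w k = w a.
Proof.
move=> w_step; elim=> [|k IHk] k_in; first by have -> : a = 0%N by lia.
have [lt_ak | le_ka] := ltnP a k.+1; last by have -> : a = k.+1 by lia.
by rewrite -w_step ?IHk //; lia.
Qed.

Lemma haar_block_diff_eq0 (V : zmodType) (a h : nat) (w : nat -> V) :
  (forall k, (a <= k)%N -> (k.+1 < a + h + h)%N -> w k = w k.+1) ->
  haar_block_diff w a h = 0.
Proof.
move=> /step_eq_const w_const; rewrite /haar_block_diff.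
rewrite (eq_big_nat _ _ (F2 := fun=> w a)) => [|k k_in]; last by apply: w_const; lia.
rewrite [X in _ - X](eq_big_nat _ _ (F2 := fun=> w a)) => [|k k_in]; last first.
  by apply: w_const; lia.
by rewrite !sumr_const_nat !addKn subrr.
Qed.

Definition haar_block {R : pzRingType} (a h : nat) (c : R) (k : nat) : R :=
  if (a <= k < a + h)%N then c
  else if (a + h <= k < a + h + h)%N then - c else 0.

Lemma sum_haar_block (R : pzRingType) (n a h : nat) (c : R) (w : nat -> R) :
  (a + h + h <= n)%N ->
  \sum_(0 <= k < n) haar_block a h c k * w k = c * haar_block_diff w a h.
Proof.
move=> le_n.
have [le_a_n le_a_ah le_ah_ahh] : [/\ a <= n, a <= a + h & a + h <= a + h + h]%N.
  by split; lia.
have outside k : (k < a)%N || (a + h + h <= k)%N -> haar_block a h c k * w k = 0.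
  by move=> k_out; rewrite /haar_block ifF ?ifF ?mul0r //; lia.
rewrite [LHS](big_cat_nat _ le_a_n) //=.
rewrite [X in _ + X](big_cat_nat (leq_trans le_a_ah le_ah_ahh) le_n) /=.
rewrite [X in _ + (X + _)](big_cat_nat le_a_ah le_ah_ahh) /=.
rewrite big1_seq => [|k]; last by rewrite mem_index_iota => k_in; apply: outside; lia.
rewrite [X in _ + (_ + X)]big1_seq => [|k]; last first.
  by rewrite mem_index_iota => k_in; apply: outside; lia.
rewrite add0r addr0 /haar_block_diff mulrBr !mulr_sumr -sumrN.
congr (_ + _); apply: eq_big_nat => k k_in; rewrite /haar_block.
  by rewrite ifT //; lia.
by rewrite ifF ?ifT ?mulNr //; lia.
Qed.

Lemma norm_sum_nat_le (R : numDomainType) (a b : nat) (w : nat -> R) :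
  (forall k, (a <= k < b)%N -> `|w k| <= 1) ->
  `|\sum_(a <= k < b) w k| <= (b - a)%:R.
Proof.
move=> w_le1; apply: le_trans (ler_norm_sum _ _ _) _.
by rewrite -sumr_const_nat; apply: ler_sum_nat.
Qed.

Section InvSqrt.
Context {R : rcfType}.

Lemma invsqrt_norm_le1 (x y : R) : 0 < x -> `|y| <= x ->
  (Num.sqrt x)^-1 * `|(Num.sqrt x)^-1 * y| <= 1.
Proof.
move=> x_gt0 y_le.
rewrite normrM ger0_norm ?invr_ge0 ?sqrtr_ge0 // mulrA -expr2 exprVn.
by rewrite sqr_sqrtr ?ler_pdivrMl ?mulr1 // ltW.
Qed.

Lemma haar_block_diff_le1 (a : nat) {h : nat} {w : nat -> R} : (0 < h)%N ->
  (forall k, (a <= k < a + h + h)%N -> `|w k| <= 1) ->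
  (Num.sqrt (h + h)%:R)^-1 * `|(Num.sqrt (h + h)%:R)^-1 * haar_block_diff w a h| <= 1.
Proof.
move=> h_gt0 w_le1; apply: invsqrt_norm_le1; first by rewrite ltr0n; lia.
apply: le_trans (ler_normB _ _) _; rewrite natrD lerD //.
  rewrite -[X in _ <= X%:R](addKn a h); apply: norm_sum_nat_le => k k_in.
  by apply: w_le1; lia.
rewrite -[X in _ <= X%:R](addKn (a + h) h); apply: norm_sum_nat_le => k k_in.
by apply: w_le1; lia.
Qed.

End InvSqrt.

Lemma card_fibers_nat (T : finType) (A : {set T}) (f : T -> nat) (N : nat) :
  {in A, forall x, f x < N}%N ->
  (\sum_(0 <= j < N) #|[set x in A | f x == j]| = #|A|)%N.
Proof.
move=> fA; rewrite -sum1_card.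
have fiberE j : #|[set x in A | f x == j]| = (\sum_(x in A) (f x == j))%N.
  rewrite -sum1_card big_mkcond [RHS]big_mkcond; apply: eq_bigr => x _.
  by rewrite !inE; case: (x \in A); case: (f x == j).
under eq_bigr do rewrite fiberE.
rewrite exchange_big /=; apply: eq_bigr => x xA.
rewrite -big_mkcond /= (eq_bigl (fun j => j == f x)) => [|j]; last by rewrite eq_sym.
by rewrite big_nat1_eq fA.
Qed.

Definition nat_ext {T : Type} (x0 : T) {n : nat} (v : 'I_n -> T) (k : nat) : T :=
  if insub k is Some o then v o else x0.

Lemma nat_extE {T : Type} (x0 : T) {n : nat} (v : 'I_n -> T) (o : 'I_n) :
  nat_ext x0 v o = v o.
Proof. by rewrite /nat_ext valK. Qed.

Lemma ip_nat_ext {R : pzRingType} {n : nat} (u v : 'I_n -> R) (F : nat -> R) :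
  (forall k, u k = F k) -> ip u v = \sum_(0 <= k < n) F k * nat_ext 0 v k.
Proof.
by move=> uF; rewrite big_mkord; apply: eq_bigr => k _; rewrite uF nat_extE.
Qed.

Lemma pm1_nat_ext_le1 (R : numDomainType) (n : nat) (v : 'I_n -> R) :
  is_pm1 v -> forall k, `|nat_ext 0 v k| <= 1.
Proof.
move=> v_pm1 k; rewrite /nat_ext; case: insub => [o|]; last by rewrite normr0.
by case: (v_pm1 o) => ->; rewrite ?normrN normr1.
Qed.

Definition sign_change_set {T : eqType} {n : nat} (v : 'I_n -> T) : {set 'I_n} :=
  [set i : 'I_n | [exists j : 'I_n, (val j == (val i).+1)%N && (v i != v j)]].

Lemma sign_changesE (T : eqType) (n : nat) (v : 'I_n -> T) :
  sign_changes v = #|sign_change_set v|.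
Proof. by []. Qed.

Lemma nat_ext_succ (T : eqType) (x0 : T) (n : nat) (v : 'I_n -> T) (k : nat) :
  (k.+1 < n)%N -> (forall o : 'I_n, val o = k -> o \notin sign_change_set v) ->
  nat_ext x0 v k = nat_ext x0 v k.+1.
Proof.
move=> lt_k1n no_change.
have lt_kn : (k < n)%N by apply: ltnW.
have := no_change (Ordinal lt_kn) erefl; rewrite inE negb_exists => /forallP.
move=> /(_ (Ordinal lt_k1n)); rewrite eqxx negbK => /eqP.
by rewrite -(nat_extE x0 v (Ordinal lt_kn)) -(nat_extE x0 v (Ordinal lt_k1n)).
Qed.

Section HaarCoefficients.
Context {R : rcfType} {m : nat} {v : 'I_(2 ^ m) -> R}.
Hypothesis v_pm1 : is_pm1 v.

Local Notation haar_term i j :=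
  (haar_weight R m i * `|ip (@haar_psi R m i j) v|).

Lemma haar_support_halves (i : nat) : (i < m)%N ->
  (2 ^ (m - i) = 2 ^ (m - i.+1) + 2 ^ (m - i.+1))%N.
Proof. by move=> lt_im; rewrite -subnSK // expnS mul2n -addnn. Qed.

Lemma haar_psiE (i j : nat) : (i < m)%N ->
  let h := (2 ^ (m - i.+1))%N in
  forall k, @haar_psi R m i j k = haar_block (j * (h + h)) h (Num.sqrt (h + h)%:R)^-1 k.
Proof.
move=> lt_im h k; rewrite /haar_psi /haar_block (haar_support_halves i lt_im) -/h.
by rewrite addnn doubleK -addnn addnA.
Qed.

Lemma haar_motherE : @haar_mother R m =1 @haar_psi R m 0 0.
Proof.
move=> k; rewrite /haar_mother /haar_psi subn0 mul0n !add0n /=.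
by case: ltnP => //= _; rewrite ltn_ord.
Qed.

Lemma haar_father_le1 : haar_weight R m 0 * `|ip (@haar_father R m) v| <= 1.
Proof.
rewrite (ip_nat_ext _ v (fun=> (Num.sqrt (2 ^ m)%:R)^-1)) // -mulr_sumr.
rewrite /haar_weight subn0; apply: invsqrt_norm_le1; first by rewrite ltr0n expn_gt0.
rewrite -[X in _ <= X%:R]subn0; apply: norm_sum_nat_le => k _.
exact: pm1_nat_ext_le1.
Qed.

Lemma haar_term_le_sign_changes (i j : nat) : (i < m)%N -> (j < 2 ^ i)%N ->
  haar_term i j <=
    #|[set o in sign_change_set v | (val o %/ 2 ^ (m - i) == j)%N]|%:R.
Proof.
move=> lt_im lt_j; have halves := haar_support_halves i lt_im.
set h := (2 ^ (m - i.+1))%N in halves *; set a := (j * (h + h))%N.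
have h_gt0 : (0 < h)%N by rewrite expn_gt0.
have fits : (a + h + h <= 2 ^ m)%N.
  rewrite -(subnK (ltnW lt_im)) expnD halves mulnC -addnA -mulSnr.
  by rewrite leq_mul2r lt_j orbT.
rewrite /haar_weight (ip_nat_ext _ v _ (haar_psiE i j lt_im)).
rewrite sum_haar_block -/h -/a // halves.
set fiber := [set o in sign_change_set v | _].
have [[o] | no_change] := set0Pn fiber.
  move=> o_in; apply: le_trans (haar_block_diff_le1 a h_gt0 _) _.
    by move=> k _; apply: pm1_nat_ext_le1.
  by rewrite ler1n card_gt0; apply/set0Pn; exists o.
rewrite haar_block_diff_eq0 ?mulr0 ?normr0 ?mulr0 // => k le_ak lt_k1.
apply: nat_ext_succ; first exact: leq_trans lt_k1 fits.
move=> o o_k; apply/negP => o_change; apply: no_change; exists o.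
rewrite inE o_change o_k -(subnKC le_ak) /a divnMDl ?divn_small ?addn0 //; lia.
Qed.

Lemma haar_level_le_sign_changes (i : nat) : (i < m)%N ->
  \sum_(0 <= j < 2 ^ i) haar_term i j <= (sign_changes v)%:R.
Proof.
move=> lt_im.
apply: (@le_trans _ _ (\sum_(0 <= j < 2 ^ i)
  (#|[set o in sign_change_set v | (val o %/ 2 ^ (m - i) == j)%N]|%:R : R))).
  by apply: ler_sum_nat => j /andP[_ lt_j]; apply: haar_term_le_sign_changes.
rewrite -natr_sum ler_nat sign_changesE.
apply/eq_leq/card_fibers_nat => o _.
by rewrite ltn_divLR ?expn_gt0 // -expnD subnKC ?ltn_ord // ltnW.
Qed.

End HaarCoefficients.

Theorem lemma6p6 (R : rcfType) (m l : nat) (v : 'I_(2 ^ m) -> R) :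
  (0 < m)%N -> is_pm1 v -> (sign_changes v <= l)%N ->
  @haar_weighted_sum R m v <= l%:R * m%:R + 1.
Proof.
move=> m_gt0 v_pm1 le_l.
have mother_level0 : haar_weight R m 0 * `|ip (@haar_mother R m) v| =
    \sum_(0 <= j < 2 ^ 0) haar_weight R m 0 * `|ip (@haar_psi R m 0 j) v|.
  rewrite big_nat1 /ip; congr (_ * `|_|).
  by apply: eq_bigr => k _; rewrite haar_motherE.
rewrite /haar_weighted_sum -addrA mother_level0 -(big_ltn (F := fun i =>
  \sum_(0 <= j < 2 ^ i) haar_weight R m i * `|ip (@haar_psi R m i j) v|)) //.
rewrite addrC; apply: lerD; last exact: haar_father_le1.
rewrite mulr_natr -[m in _ *+ m]subn0 -sumr_const_nat.
apply: ler_sum_nat => i /andP[_ lt_im].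
by apply: le_trans (haar_level_le_sign_changes v_pm1 i lt_im) _; rewrite ler_nat.
Qed.
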